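(* Let $D$ be the automaton built from complete DFAs $A,B,C$ as described in the context, let $i$ be a state of $A$, and let $S,S'\subseteq Q_B\times Q_C$ be tableaux with $S\rightarrow S'$. Then the states $(i,S)$ and $(i,S')$ of $D$ are equivalent, i.e. for every $w\in\Sigma^*$, $(i,S)\cdot w\in F_D$ iff $(i,S')\cdot w\in F_D$.
   Context: Let $A=(\Sigma,Q_A=\{0,\dots,m-1\},0,F_A,\cdot)$, $B=(\Sigma,Q_B=\{q_0,\dots,q_{n-1}\},q_0,F_B,\cdot)$, $C=(\Sigma,Q_C=\{r_0,\dots,r_{p-1}\},r_0,F_C,\cdot)$ be complete DFAs. $D=(\Sigma,Q_A\times 2^{Q_B\times Q_C},i_D,F_D,\cdot)$ where $i_D=(0,\emptyset)$ if $0\notin F_A$ and $i_D=(0,\{(q_0,r_0)\})$ otherwise; $(i,S)\in F_D$ iff $S$ contains a pair $(q,r)$ with exactly one of $q\in F_B$, $r\in F_C$; and for $a\in\Sigma$, $(i,S)\cdot a=(i\cdot a,S\cdot a)$ if $i\cdot a\notin F_A$ and $(i\cdot a,S\cdot a\cup\{(q_0,r_0)\})$ otherwise, with $S\cdot a=\{(q\cdot a,r\cdot a):(q,r)\in S\}$; this extends to words. A tableau is a subset of $Q_B\times Q_C$. Write $S\rightarrow S'$ if $S'=S\cup\{(q_y,r_{x'})\}$ where $(q_y,r_{x'})\notin S$ and $(q_x,r_{x'}),(q_x,r_{y'}),(q_y,r_{y'})\in S$ for some $q_x\neq q_y$, $r_{x'}\neq r_{y'}$ (i.e. $S'$ completes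 a right triangle of $S$ into a rectangle). *)

From mathcomp Require Import all_boot.
Set Implicit Arguments. Unset Strict Implicit. Unset Printing Implicit Defensive.

Record dfa (Sigma : finType) := DFA {
  dstate : finType;
  dstart : dstate;
  dfinal : {set dstate};
  dtrans : dstate -> Sigma -> dstate }.

Section D.
Variables (Sigma : finType) (A B C : dfa Sigma).

Definition tableau := {set (dstate B * dstate C)}.

Definition tab_step (S : tableau) (a : Sigma) : tableau :=
  [set (dtrans p.1 a, dtrans p.2 a) | p in S].

Definition D_state := (dstate A * tableau)%type.

Definition D_start : D_state :=
  if dstart A \in dfinal A then (dstart A, [set (dstart B, dstart C)])
  else (dstart A, set0).

Definition D_final (x : D_state) : bool :=
  [exists p in x.2, (p.1 \in dfinal B) != (p.2 \in dfinal C)].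

Definition D_trans (x : D_state) (a : Sigma) : D_state :=
  let i' := dtrans x.1 a in
  if i' \in dfinal A then (i', (dstart B, dstart C) |: tab_step x.2 a)
  else (i', tab_step x.2 a).

Definition D_run (x : D_state) (w : seq Sigma) : D_state := foldl D_trans x w.

(* S -> S' : S' completes a right triangle of S into a rectangle *)
Definition tab_arrow (S S' : tableau) : Prop :=
  exists (qx qy : dstate B) (rx ry : dstate C),
    [/\ qx != qy, rx != ry, (qy, rx) \notin S,
        [&& (qx, rx) \in S, (qx, ry) \in S & (qy, ry) \in S] &
        S' = (qy, rx) |: S].
End D.

From mathcomp Require Import all_boot.

(* Mismatch parity is additive around a rectangle: if three corners of a
   rectangle agree on acceptance in B and C, so does the fourth.  Hence adding
   the fourth corner never changes finality, and this relation between
   tableaux is preserved by the transitions of D, which act on all pairs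
   pointwise and possibly add the same pair to both tableaux. *)

Section RectangleCompletion.
Variables (Sigma : finType) (A B C : dfa Sigma).

Definition completes_rectangle (T T' : tableau B C) : Prop :=
  exists q q' r r', T' = (q, r) |: T /\
    [/\ (q', r) \in T, (q', r') \in T & (q, r') \in T].

Lemma tab_arrow_completes_rectangle (S S' : tableau B C) :
  tab_arrow S S' -> completes_rectangle S S'.
Proof.
move=> [qx [qy [rx [ry [_ _ _ /and3P [h1 h2 h3] ->]]]]].
by exists qy, qx, rx, ry.
Qed.

Lemma completes_rectangle_step (T T' : tableau B C) (a : Sigma) :
  completes_rectangle T T' ->
  completes_rectangle (tab_step T a) (tab_step T' a).
Proof.
move=> [q [q' [r [r' [-> [h1 h2 h3]]]]]].
exists (dtrans q a), (dtrans q' a), (dtrans r a), (dtrans r' a); split.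
  by rewrite /tab_step imsetU imset_set1.
by split; apply/imsetP; [exists (q', r) | exists (q', r') | exists (q, r')].
Qed.

Lemma completes_rectangle_setU1 (T T' : tableau B C) p :
  completes_rectangle T T' -> completes_rectangle (p |: T) (p |: T').
Proof.
move=> [q [q' [r [r' [-> [h1 h2 h3]]]]]].
exists q, q', r, r'; split; first by rewrite setUCA.
by split; rewrite in_setU ?h1 ?h2 ?h3 orbT.
Qed.

Lemma D_final_completes_rectangle (x y : D_state A B C) :
  completes_rectangle x.2 y.2 -> D_final x = D_final y.
Proof.
case: x y => [i T] [j _] [q [q' [r [r' [/= -> [h1 h2 h3]]]]]].
rewrite /D_final /=; apply/existsP/existsP => -[p /andP [Tp mismatch]].
  by exists p; rewrite in_setU Tp orbT.
move: Tp mismatch; rewrite in_setU => /orP [/set1P -> /= mismatch_qr|Tp];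
  last by exists p; rewrite Tp.
have [mismatch_q'r|match_q'r] := boolP ((q' \in dfinal B) != (r \in dfinal C)).
  by exists (q', r); rewrite h1.
have [mismatch_q'r'|match_q'r'] := boolP ((q' \in dfinal B) != (r' \in dfinal C)).
  by exists (q', r'); rewrite h2.
exists (q, r'); rewrite h3 /=.
by move: match_q'r match_q'r' mismatch_qr; rewrite !negbK => /eqP <- /eqP ->.
Qed.

Lemma D_run_completes_rectangle (i : dstate A) (T T' : tableau B C) w :
  completes_rectangle T T' ->
  completes_rectangle (D_run (A:=A) (i, T) w).2 (D_run (A:=A) (i, T') w).2.
Proof.
elim: w i T T' => [|a w IH] i T T' hTT' //=.
rewrite /D_trans /=; case: ifP => _; apply: IH.
  exact/completes_rectangle_setU1/completes_rectangle_step.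
exact: completes_rectangle_step.
Qed.

End RectangleCompletion.

Theorem lemma4 (Sigma : finType) (A B C : dfa Sigma)
  (i : dstate A) (S S' : tableau B C) :
  tab_arrow S S' ->
  forall w : seq Sigma,
    D_final (D_run (A:=A) (B:=B) (C:=C) (i, S) w) = D_final (D_run (A:=A) (B:=B) (C:=C) (i, S') w).
Proof.
move=> /tab_arrow_completes_rectangle hSS' w.
exact/D_final_completes_rectangle/D_run_completes_rectangle.
Qed.
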